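(* Let $\lambda\in P$, $\lhd\in\mathrm{RO}(\lambda,\Delta^+)$ and $w\in W$. For every $A\in\mathcal{A}(w,\Gamma)$, $$n(A)\equiv\mathrm{nega}(\Xi(A))+\ell(\mathrm{end}(A))-\ell(\iota(\Xi(A)))\pmod 2.$$
   Context: Let $\mathfrak{g}$ be a finite-dimensional complex simple Lie algebra with root system $\Delta$, positive roots $\Delta^+$, Weyl group $W$ with length function $\ell$ and reflections $s_\alpha$, weight lattice $P$, pairing $\langle\cdot,\cdot\rangle$, $\alpha^\vee$ the coroot of $\alpha$, $\rho=\frac12\sum_{\alpha\in\Delta^+}\alpha$. For $\alpha\in\Delta$, $\operatorname{sgn}(\alpha)=\pm1$ according as $\alpha\in\pm\Delta^+$, and $|\alpha|=\operatorname{sgn}(\alpha)\alpha$. For $\lambda\in P$, $\Delta^+(\lambda)_{>0}$, $\Delta^+(\lambda)_{=0}$, $\Delta^+(\lambda)_{<0}$ are the sets of $\alpha\in\Delta^+$ with $\langle\lambda,\alpha^\vee\rangle>0$, $=0$, $<0$. Quantum Bruhat graph $\mathrm{QBG}(W)$: vertices $W$; an edge $x\xrightarrow{\alpha}y$ ($\alpha\in\Delta^+$) whenever $y=xs_\alpha$ and either $\ell(y)=\ell(x)+1$ (Bruhat edge) or $\ell(y)=\ell(x)-2\langle\rho,\alpha^\vee\rangle+1$ (quantum edge). For $v,u\in W$, $\ell(v\Rightarrow u)$ denotes the length of a shortest directed path from $v$ to $u$ in $\mathrm{QBG}(W)$. Reflection orders: a total order $\lhd$ on $\Delta^+$ is a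 reflection order if whenever $\alpha,\beta,\alpha+\beta\in\Delta^+$, either $\alpha\lhd\alpha+\beta\lhd\beta$ or $\beta\lhd\alpha+\beta\lhd\alpha$; $\mathrm{RO}(\lambda,\Delta^+)$ is the set of those with $\alpha\lhd\beta\lhd\gamma$ for $\alpha\in\Delta^+(\lambda)_{<0}$, $\beta\in\Delta^+(\lambda)_{=0}$, $\gamma\in\Delta^+(\lambda)_{>0}$. Fix such $\lhd$. Interpolated QLS paths: for $x,y\in W$, $\sigma\in\mathbb{Q}$, write $x\overset{(\lambda,+)}{\Longrightarrow}_\sigma y$ if there is a directed path $x=x_0\xrightarrow{\gamma_1}x_1\to\cdots\xrightarrow{\gamma_r}x_r=y$ in $\mathrm{QBG}(W)$ ($r\ge0$) with all $\gamma_k\in\Delta^+(\lambda)_{>0}$, $\gamma_{k+1}\lhd\gamma_k$ for all $k$, and $\sigma\langle\lambda,\gamma_k^\vee\rangle\in\mathbb{Z}$ for all $k$; $x\overset{(\lambda,-)}{\Longrightarrow}_\sigma y$ is defined identically with $\Delta^+(\lambda)_{<0}$ in place of $\Delta^+(\lambda)_{>0}$. An interpolated QLS path of shape $\lambda$ is a triple $\eta=(x_1,\dots,x_s;y_1,\dots,y_{s-1};\sigma_0,\dots,\sigma_s)$ ($s\ge1$) with $x_i,y_i\in W$, $x_i\ne x_{i+1}$, $y_i\ne y_{i+1}$, $\sigma_i\in\mathbb{Q}$, $0=\sigma_0<\sigma_1<\dots<\sigma_s=1$, and for $1\le i\le s-1$: $x_{i+1}\overset{(\lambda,-)}{\Longrightarrow}_{\sigma_i}y_i$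 and $y_i\overset{(\lambda,+)}{\Longrightarrow}_{\sigma_i}x_i$. $\mathrm{IQLS}(\lambda)$ is the set of these; $\iota(\eta):=x_1$; $\mathrm{nega}(\eta):=\sum_{k=1}^{s-1}\ell(x_{k+1}\Rightarrow y_k)$. Affine data: real affine coroots $\gamma^\vee+k\tilde\delta$ ($\gamma\in\Delta$, $k\in\mathbb{Z}$, $\tilde\delta$ formal); for $\beta^\vee=\gamma^\vee+k\tilde\delta$ put $\overline{\beta^\vee}=\gamma^\vee$, $\overline\beta=\gamma$, $\deg(\beta^\vee)=k$; it is positive if $k>0$ or ($k=0$, $\gamma\in\Delta^+$), negative otherwise; $t_\lambda(\gamma^\vee+k\tilde\delta)=\gamma^\vee+(k-\langle\lambda,\gamma^\vee\rangle)\tilde\delta$; $\mathrm{Inv}(\lambda)$ is the set of positive real affine coroots $\beta^\vee$ with $t_\lambda(\beta^\vee)$ negative (for these, $\langle\lambda,\overline{\beta^\vee}\rangle>0$ and $\overline\beta\in\Delta^+(\lambda)_{>0}\sqcup(-\Delta^+(\lambda)_{<0})$); put $d(\beta^\vee)=\deg(\beta^\vee)/\langle\lambda,\overline{\beta^\vee}\rangle$. Order $\prec$ on $\Delta^+(\lambda)_{>0}\sqcup(-\Delta^+(\lambda)_{<0})$: elements of $\Delta^+(\lambda)_{>0}$ precede those of $-\Delta^+(\lambda)_{<0}$; $\gamma\prec\gamma'$ iff $\gamma\lhd\gamma'$ on $\Delta^+(\lambda)_{>0}$; $-\alpha\prec-\alpha'$ iff $\alpha\lhd\alpha'$ on $-\Delta^+(\lambda)_{<0}$.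 Order $<$ on $\mathrm{Inv}(\lambda)$: $\beta^\vee<\beta'^\vee$ iff $d(\beta^\vee)<d(\beta'^\vee)$, or they are equal and $\overline{\beta'}\prec\overline\beta$. Write $\mathrm{Inv}(\lambda)=\{\beta_1^\vee<\dots<\beta_r^\vee\}$, $\gamma_k:=\overline{\beta_k}$, $d_k:=d(\beta_k^\vee)$, and $\Gamma:=(\gamma_1,\dots,\gamma_r)$. Admissible subsets: for $w\in W$, $\mathcal{A}(w,\Gamma)$ is the set of $A=\{j_1<\dots<j_p\}\subseteq\{1,\dots,r\}$ such that $w=u_0\xrightarrow{|\gamma_{j_1}|}u_1\to\cdots\xrightarrow{|\gamma_{j_p}|}u_p$ is a directed path in $\mathrm{QBG}(W)$, where $u_a:=ws_{|\gamma_{j_1}|}\cdots s_{|\gamma_{j_a}|}$; $\mathrm{end}(A):=u_p$; $n(A):=\#\{j\in A\mid\gamma_j\in-\Delta^+\}$. One has $0\le d_{j_1}\le\dots\le d_{j_p}\le1$. The map $\Xi$: let $0<c_1<\dots<c_{t-1}<1$ ($t\ge1$) be the distinct values among $d_{j_1},\dots,d_{j_p}$ lying strictly between $0$ and $1$; put $c_0:=0$, $c_t:=1$. For $1\le a\le t$ let $m_a:=\#\{b\mid d_{j_b}<c_a\}$; for $1\le a\le t-1$ let $n_a:=m_a+\#\{b\mid m_a<b\le m_{a+1},\ \gamma_{j_b}\in-\Delta^+\}$. Then $\Xi(A):=(x_1,\dots,x_t;y_1,\dots,y_{t-1};\sigma_0,\dots,\sigma_t)$ with $x_i:=u_{m_{t+1-i}}$,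 $y_i:=u_{n_{t-i}}$, $\sigma_i:=1-c_{t-i}$; this lies in $\mathrm{IQLS}(\lambda)$. *)

From HB Require Import structures.
From mathcomp Require Import all_boot all_order all_algebra.
From mathcomp Require Import reals.
From Stdlib Require Import ClassicalEpsilon.

Set Implicit Arguments.
Unset Strict Implicit.
Unset Printing Implicit Defensive.

Import Order.TTheory GRing.Theory Num.Theory.
Local Open Scope ring_scope.

Section Euclid.
Variables (R : realType) (n : nat).

Definition dot (a b : 'cV[R]_n) : R := \sum_(i < n) a i ord0 * b i ord0.

Definition pair (l a : 'cV[R]_n) : R := 2 * dot l a / dot a a.

(* the reflection s_a : x |-> x - <x,a^vee> a, as a matrix acting on the left *)
Definition refl (a : 'cV[R]_n) : 'M[R]_n :=
  1%:M - (2 / dot a a) *: (a *m a^T).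

Definition is_int (x : R) : Prop := exists z : int, x = z%:~R.

End Euclid.

Record rootSystem (R : realType) (n : nat) := RootSystem {
  rs_roots : seq 'cV[R]_n;
  roots_uniq : uniq rs_roots;
  roots_nonempty : rs_roots != [::];
  roots_nz : 0 \notin rs_roots;
  roots_span : forall x : 'cV[R]_n,
      exists c : nat -> R, x = \sum_(i < size rs_roots) c i *: rs_roots`_i;
  roots_refl : forall a b, a \in rs_roots -> b \in rs_roots -> refl a *m b \in rs_roots;
  roots_cryst : forall a b, a \in rs_roots -> b \in rs_roots -> is_int (pair b a);
  roots_reduced : forall a (c : R), a \in rs_roots -> c *: a \in rs_roots ->
      c = 1 \/ c = -1;
  roots_irred : forall P : pred 'cV[R]_n,
      (forall a b, a \in rs_roots -> b \in rs_roots -> P a -> ~~ P b -> dot a b = 0) ->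
      all P rs_roots \/ all (predC P) rs_roots
}.

Inductive inW (R : realType) (n : nat) (rs : rootSystem R n) : 'M[R]_n -> Prop :=
  | inW1 : inW rs 1%:M
  | inWs : forall x a, inW rs x -> a \in rs_roots rs -> inW rs (x *m refl a).

Section RootData.
Variables (R : realType) (n : nat) (rs : rootSystem R n).
(* v : a regular vector; Delta^+ = {a in Delta | (a, v) > 0} *)
Variable v : 'cV[R]_n.

Local Notation Delta := (rs_roots rs).

Definition is_pos (a : 'cV[R]_n) : bool := 0 < dot a v.
Definition posroots : seq 'cV[R]_n := [seq a <- Delta | is_pos a].
Definition sgnabs (a : 'cV[R]_n) : 'cV[R]_n := if is_pos a then a else - a.
Definition rho : 'cV[R]_n := 2^-1 *: \sum_(a <- posroots) a.

Definition len (x : 'M[R]_n) : nat :=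
  count (fun a => dot (x *m a) v < 0) posroots.

Definition qbg_edge (x : 'M[R]_n) (a : 'cV[R]_n) (y : 'M[R]_n) : bool :=
  [&& a \in posroots, y == x *m refl a &
      (len y == (len x).+1)%N ||
      ((len y)%:R == (len x)%:R - 2 * pair rho a + 1 :> R)].

Fixpoint qbg_walk (x : 'M[R]_n) (gs : seq 'cV[R]_n) : bool :=
  if gs is g :: gs' then qbg_edge x g (x *m refl g) && qbg_walk (x *m refl g) gs'
  else true.

Definition walk_end (x : 'M[R]_n) (gs : seq 'cV[R]_n) : 'M[R]_n :=
  foldl (fun u g => u *m refl g) x gs.

Fixpoint seqs_len (k : nat) : seq (seq 'cV[R]_n) :=
  if k is k'.+1 then [seq a :: t | a <- posroots, t <- seqs_len k'] else [:: [::]].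

Definition reach_len (x y : 'M[R]_n) (k : nat) : bool :=
  has (fun gs => qbg_walk x gs && (walk_end x gs == y)) (seqs_len k).

(* l(x => y): length of a shortest directed path from x to y (0 if none) *)
Definition qbg_dist (x y : 'M[R]_n) : nat :=
  match excluded_middle_informative (exists k, reach_len x y k) with
  | left H => @ex_minn (reach_len x y) H
  | right _ => 0%N
  end.

Definition is_weight (lam : 'cV[R]_n) : Prop :=
  forall a, a \in Delta -> is_int (pair lam a).

(* a total order on Delta^+ is given by a listing [ord] of Delta^+ *)
Variable ord : seq 'cV[R]_n.
Definition rlt (a b : 'cV[R]_n) : bool := (index a ord < index b ord)%N.

Definition reflection_order : Prop :=
  [/\ uniq ord, perm_eq ord posroots &
      forall a b, a \in posroots -> b \in posroots -> a + b \in posroots ->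
        (rlt a (a + b) && rlt (a + b) b) || (rlt b (a + b) && rlt (a + b) a)].

Variable lam : 'cV[R]_n.

Definition RO_lambda : Prop :=
  reflection_order /\
  forall a b, a \in posroots -> b \in posroots ->
    [/\ pair lam a < 0 -> pair lam b = 0 -> rlt a b,
        pair lam a = 0 -> pair lam b > 0 -> rlt a b &
        pair lam a < 0 -> pair lam b > 0 -> rlt a b].

(* A real affine coroot g^vee + k delta~ is encoded by the pair (g, k). *)
Definition aff_pos (b : 'cV[R]_n * int) : bool :=
  (0 < b.2) || ((b.2 == 0) && is_pos b.1).
(* t_lam(g^vee + k delta~) = g^vee + (k - <lam,g^vee>) delta~ is negative *)
Definition tlam_neg (b : 'cV[R]_n * int) : bool :=
  let e := b.2%:~R - pair lam b.1 in (e < 0) || ((e == 0) && ~~ is_pos b.1).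
Definition in_Inv (b : 'cV[R]_n * int) : bool := aff_pos b && tlam_neg b.

(* a finite range of degrees containing those of all elements of Inv(lam):
   such elements satisfy 0 <= k <= <lam, g^vee> *)
Definition deg_bound : nat := `|Num.floor (\sum_(a <- Delta) `|pair lam a|)|%N.
Definition Inv_cands : seq ('cV[R]_n * int) :=
  [seq (a, Posz k) | a <- Delta, k <- iota 0 deg_bound.+1].

Definition dval (b : 'cV[R]_n * int) : R := b.2%:~R / pair lam b.1.

(* key for the order \prec on Delta^+(lam)_{>0} \sqcup (-Delta^+(lam)_{<0}) *)
Definition prec_key (g : 'cV[R]_n) : nat :=
  if is_pos g then index g ord else (size ord + index (- g) ord)%N.

(* b <= b' for the order < on Inv(lam) (reflexive closure) *)
Definition Inv_le (b b' : 'cV[R]_n * int) : bool :=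
  (dval b < dval b') ||
  ((dval b == dval b') && (prec_key b'.1 <= prec_key b.1)%N).

Definition Inv_list : seq ('cV[R]_n * int) :=
  sort Inv_le [seq b <- Inv_cands | in_Inv b].

Definition r_len : nat := size Inv_list.
Definition beta (j : nat) : 'cV[R]_n * int := nth (0, 0) Inv_list j.
Definition gam (j : nat) : 'cV[R]_n := (beta j).1.   (* gamma_{j+1} *)
Definition dd (j : nat) : R := dval (beta j).        (* d_{j+1} *)

(* A subset {j_1 < ... < j_p} of {1,...,r} is encoded (0-based) as the
   strictly increasing list [j_1 - 1; ...; j_p - 1]. *)
Variable w : 'M[R]_n.

Definition us (A : seq nat) : seq 'M[R]_n :=
  w :: scanl (fun u j => u *m refl (sgnabs (gam j))) w A.
Definition u (A : seq nat) (a : nat) : 'M[R]_n := nth w (us A) a.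

Fixpoint adm_walk (x : 'M[R]_n) (A : seq nat) : bool :=
  if A is j :: A' then
    let y := x *m refl (sgnabs (gam j)) in qbg_edge x (sgnabs (gam j)) y && adm_walk y A'
  else true.

Definition admissible (A : seq nat) : bool :=
  [&& sorted ltn A, all (fun j => j < r_len)%N A & adm_walk w A].

Definition end_A (A : seq nat) : 'M[R]_n := last w (us A).
Definition n_A (A : seq nat) : nat := count (fun j => ~~ is_pos (gam j)) A.

(* interpolated QLS triples (x_1..x_s ; y_1..y_{s-1} ; sigma_0..sigma_s) *)
Record triple := Triple { xs : seq 'M[R]_n; ys : seq 'M[R]_n; sigmas : seq R }.

Definition iota_eta (eta : triple) : 'M[R]_n := nth 0 (xs eta) 0.
Definition nega (eta : triple) : nat :=
  (\sum_(1 <= k < size (xs eta)) qbg_dist (nth 0%R (xs eta) k) (nth 0%R (ys eta) k.-1))%N.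

Section Xi.
Variable A : seq nat.
Definition ds : seq R := [seq dd j | j <- A].
Definition cs : seq R := sort <=%R (undup [seq d <- ds | (0 < d) && (d < 1)]).
Definition t_A : nat := (size cs).+1.
Definition cc (a : nat) : R :=
  if a == 0%N then 0 else if (a < t_A)%N then nth 0 cs a.-1 else 1.
Definition mm (a : nat) : nat := count (fun d => d < cc a) ds.
Definition negflags : seq bool := [seq ~~ is_pos (gam j) | j <- A].
Definition nn (a : nat) : nat :=
  (mm a + count id (take (mm a.+1 - mm a) (drop (mm a) negflags)))%N.
Definition Xi : triple :=
  Triple [seq u A (mm (t_A.+1 - i)) | i <- iota 1 t_A]
         [seq u A (nn (t_A - i)) | i <- iota 1 t_A.-1]
         [seq 1 - cc (t_A - i) | i <- iota 0 t_A.+1].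
End Xi.

End RootData.

(* Every edge x -> y of the quantum Bruhat graph has l(y) - l(x) odd: it is 1
   for a Bruhat edge and 1 - 2<rho, a^vee> for a quantum edge, where
   2<rho, a^vee> = sum_(b > 0) <b, a^vee> is even because b |-> |s_a b| is an
   involution of the positive roots with <b, a^vee> + <|s_a b|, a^vee> even
   and <b, a^vee> in {0, 2, -2} at its fixed points.  Hence every path from x
   to y, in particular a shortest one, has length congruent to l(y) - l(x).
   Along the path u_0 -> ... -> u_p of A this makes nega(Xi(A)) congruent to
   sum_a (n_a - m_a), the number of b in (m_1, m_t] with gamma_(j_b) negative,
   and l(end A) - l(iota(Xi A)) congruent to p - m_t.  Finally b <= m_1 means
   d_(j_b) <= 0, which forces gamma_(j_b) positive, and b > m_t means
   d_(j_b) >= 1, which forces it negative. *)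

From HB Require Import structures.
From mathcomp Require Import all_boot all_order all_algebra.
From mathcomp Require Import reals zify ring.
From Stdlib Require Import ClassicalEpsilon.

Set Implicit Arguments.
Unset Strict Implicit.
Unset Printing Implicit Defensive.

Import Order.TTheory GRing.Theory Num.Theory.
Local Open Scope ring_scope.

Section Reflections.
Variables (R : realType) (n : nat).
Implicit Types a b c : 'cV[R]_n.

Lemma dotC a b : dot a b = dot b a.
Proof. by apply: eq_bigr => i _; rewrite mulrC. Qed.

Lemma dotDl a b c : dot (a + b) c = dot a c + dot b c.
Proof. by rewrite /dot -big_split; apply: eq_bigr => i _; rewrite mxE mulrDl. Qed.

Lemma dotZl k a c : dot (k *: a) c = k * dot a c.
Proof. by rewrite /dot mulr_sumr; apply: eq_bigr => i _; rewrite mxE mulrA. Qed.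

Lemma dotNl a c : dot (- a) c = - dot a c.
Proof. by rewrite -scaleN1r dotZl mulN1r. Qed.

Lemma dot0l c : dot 0 c = 0.
Proof. by rewrite -(scale0r (0 : 'cV[R]_n)) dotZl mul0r. Qed.

Lemma dot_suml (T : Type) (s : seq T) (F : T -> 'cV[R]_n) c :
  dot (\sum_(x <- s) F x) c = \sum_(x <- s) dot (F x) c.
Proof. by elim: s => [|x s IH]; rewrite ?big_nil ?dot0l // !big_cons dotDl IH. Qed.

Lemma dot_self_eq0 a : (dot a a == 0) = (a == 0).
Proof.
apply/eqP/eqP => [a0|->]; last exact: dot0l.
apply/matrixP => i j; rewrite (ord1 j) mxE.
have /(_ i isT)/eqP := psumr_eq0P (fun k _ => sqr_ge0 (a k ord0)) a0.
by rewrite mulf_eq0 orbb => /eqP.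
Qed.

Lemma pairDl a b c : pair (a + b) c = pair a c + pair b c.
Proof. by rewrite /pair dotDl mulrDr mulrDl. Qed.

Lemma pairZl k a c : pair (k *: a) c = k * pair a c.
Proof. by rewrite /pair dotZl mulrCA !mulrA. Qed.

Lemma pairNl a c : pair (- a) c = - pair a c.
Proof. by rewrite -scaleN1r pairZl mulN1r. Qed.

Lemma pair_suml (T : Type) (s : seq T) (F : T -> 'cV[R]_n) c :
  pair (\sum_(x <- s) F x) c = \sum_(x <- s) pair (F x) c.
Proof. by rewrite /pair dot_suml mulr_sumr mulr_suml. Qed.

Lemma pair_self a : a != 0 -> pair a a = 2.
Proof. by move=> a0; rewrite /pair mulfK // dot_self_eq0. Qed.

Lemma refl_mulE a b : refl a *m b = b - pair b a *: a.
Proof.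
rewrite /refl mulmxBl mul1mx -scalemxAl -mulmxA.
have -> : a^T *m b = (dot a b)%:M.
  apply/matrixP => i j; rewrite !ord1 !mxE eqxx mulr1n /dot.
  by apply: eq_bigr => k _; rewrite mxE.
by rewrite mul_mx_scalar scalerA /pair dotC mulrAC.
Qed.

Lemma pair_refl a b : a != 0 -> pair (refl a *m b) a = - pair b a.
Proof. by move=> a0; rewrite refl_mulE pairDl pairNl pairZl pair_self //; ring. Qed.

Lemma reflK a b : a != 0 -> refl a *m (refl a *m b) = b.
Proof.
by move=> a0; rewrite [LHS]refl_mulE pair_refl // refl_mulE scaleNr opprK subrK.
Qed.

Lemma refl_fixed a b : a != 0 -> refl a *m b = b -> pair b a = 0.
Proof.
move=> a0; rewrite refl_mulE => /eqP; rewrite subr_eq addrC -subr_eq subrr eq_sym.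
by rewrite scaler_eq0 (negbTE a0) orbF => /eqP.
Qed.

Lemma refl_flipped a b : refl a *m b = - b -> b = (pair b a / 2) *: a.
Proof.
rewrite refl_mulE => /eqP; rewrite subr_eq addrC -subr_eq opprK => /eqP b2.
rewrite mulrC -scalerA -b2 -[b + b]mulr2n -scaler_nat scalerA.
by rewrite mulVf ?scale1r ?pnatr_eq0.
Qed.

End Reflections.

Lemma sum_involution_even (T : eqType) (f : T -> T) (h : T -> int) (s : seq T) :
  uniq s -> {in s, forall x, f x \in s} -> {in s, forall x, f (f x) = x} ->
  {in s, forall x, (2 %| h x + h (f x))%Z} ->
  {in s, forall x, f x = x -> (2 %| h x)%Z} ->
  (2 %| \sum_(x <- s) h x)%Z.
Proof.
have [N] := ubnP (size s); elim: N s => // N IH [|x s] /ltnSE sz;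
  first by rewrite big_nil dvdz0.
move=> /andP[xs us] sf ff hf hx.
have sub_s (s' : seq T) : {subset s' <= s} -> uniq s' -> (size s' < N)%N ->
    {in s', forall y, f y \in s'} -> (2 %| \sum_(y <- s') h y)%Z.
  move=> s's u' sz' s'f; apply: IH => // y /s's ys;
    [apply: ff | apply: hf | apply: hx]; by rewrite inE ys orbT.
have sx y : y \in s -> y \in x :: s by rewrite inE => ->; rewrite orbT.
have finj : {in x :: s &, injective f}.
  by move=> y z yin zin fyz; rewrite -[y]ff // fyz ff.
have fxs y : y \in s -> y != f x -> f y \in s.
  move=> ys; apply: contraNT; have /sf := sx y ys.
  by rewrite inE => /orP[/eqP <- _|-> //]; rewrite ff ?sx.
rewrite big_cons; case: (f x =P x) => [fx | /eqP fx].
  rewrite rpredD ?hx ?mem_head //; apply: sub_s => // y ys.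
  by apply: fxs; rewrite // fx; apply: contraNneq xs => <-.
have fxs' : f x \in s by move: (sf x (mem_head x s)); rewrite inE (negbTE fx).
rewrite (big_rem _ fxs') addrA rpredD ?hf ?mem_head //; apply: sub_s.
- exact: mem_rem.
- exact: rem_uniq.
- by rewrite size_rem // (leq_ltn_trans (leq_pred _) sz).
move=> y; rewrite (mem_rem_uniq _ us) !inE => /andP[yfx ys].
have fyx : f y != f x.
  by apply: contraNneq xs => /(finj _ _ (sx y ys) (mem_head x s)) <-.
by rewrite (mem_rem_uniq _ us) !inE fyx fxs.
Qed.

Lemma foldl_map (S T U : Type) (f : U -> T -> U) (g : S -> T) z s :
  foldl f z (map g s) = foldl (fun y x => f y (g x)) z s.
Proof. by elim: s z => //= x s IH z; rewrite IH. Qed.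

Lemma filter_lt_cat_ge (T : eqType) (R : realDomainType) (f : T -> R) x (s : seq T) :
  sorted <=%R (map f s) -> [seq y <- s | f y < x] ++ [seq y <- s | x <= f y] = s.
Proof.
elim: s => //= y s IH s_sorted.
case: ltP => /= [_ | x_le_y]; first by rewrite IH ?(path_sorted s_sorted).
have ge_x : all (fun z => x <= f z) s.
  apply/allP => z zs; apply: le_trans x_le_y _.
  by have /allP := order_path_min le_trans s_sorted; apply; apply: map_f.
have lt_nil : [seq z <- s | f z < x] = [::].
  apply/eqP/negPn; rewrite -has_filter; apply/hasPn => z /(allP ge_x).
  by rewrite leNgt.
by rewrite lt_nil (all_filterP ge_x).
Qed.

Lemma eqz_mod2_addB (a b c d : nat) :
  (a + d = b + c %[mod 2])%N -> (Posz a = Posz b + Posz c - Posz d %[mod 2])%Z.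
Proof.
move=> abcd; apply/eqP; rewrite -(eqz_modDr (Posz d)) subrK -!PoszD !modz_nat.
by rewrite abcd.
Qed.

Section Roots.
Variables (R : realType) (n : nat) (rs : rootSystem R n) (v : 'cV[R]_n).
Hypothesis v_regular : forall a, a \in rs_roots rs -> dot a v != 0.
Local Notation roots := (rs_roots rs).
Local Notation posroots := (posroots rs v).
Local Notation is_pos := (is_pos v).
Local Notation sgnabs := (sgnabs v).

Lemma root_neq0 b : b \in roots -> b != 0.
Proof. by move=> bR; apply: contraNneq (roots_nz rs) => <-. Qed.

Lemma rootN b : b \in roots -> - b \in roots.
Proof.
move=> bR; have := roots_refl bR bR.
by rewrite refl_mulE pair_self ?root_neq0 // scaler_nat mulr2n opprD addrA subrr add0r.
Qed.

Lemma is_posN b : b \in roots -> is_pos (- b) = ~~ is_pos b.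
Proof. by move=> bR; rewrite /is_pos dotNl oppr_gt0 -leNgt lt_neqAle v_regular. Qed.

Lemma mem_posroots b : (b \in posroots) = (b \in roots) && is_pos b.
Proof. by rewrite mem_filter andbC. Qed.

Lemma sgnabs_posroot b : b \in roots -> sgnabs b \in posroots.
Proof.
move=> bR; rewrite /sgnabs mem_posroots; case: ifP => [-> |]; first by rewrite bR.
by rewrite rootN // is_posN // => ->.
Qed.

Lemma floor_pair_root a b : a \in roots -> b \in roots ->
  (Num.floor (pair b a))%:~R = pair b a.
Proof. by move=> aR bR; case: (roots_cryst aR bR) => z ->; rewrite intrKfloor. Qed.

Lemma sum_floor_pair_posroots_even a : a \in posroots ->
  (2 %| \sum_(b <- posroots) Num.floor (pair b a))%Z.
Proof.
rewrite mem_posroots => /andP[aR _]; have a0 := root_neq0 aR.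
pose f b := sgnabs (refl a *m b).
have fE b : f b = refl a *m b \/ f b = - (refl a *m b).
  by rewrite /f /sgnabs; case: ifP; [left | right].
apply: (@sum_involution_even _ f).
- exact/filter_uniq/roots_uniq.
- by move=> b; rewrite mem_posroots => /andP[bR _]; apply/sgnabs_posroot/roots_refl.
- move=> b; rewrite mem_posroots => /andP[bR bpos].
  by case: (fE b) => ->; rewrite /f ?mulmxN reflK // /sgnabs ?is_posN // bpos ?opprK.
- move=> b; rewrite mem_posroots => /andP[bR _].
  case: (fE b) => ->; rewrite ?pairNl pair_refl // ?opprK.
    by rewrite -(floor_pair_root aR bR) -rmorphN /= !intrKfloor addrN dvdz0.
  by apply/dvdzP; exists (Num.floor (pair b a)); rewrite mulr_natr mulr2n.
- move=> b; rewrite mem_posroots => /andP[bR _].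
  case: (fE b) => -> fixed.
    by rewrite (refl_fixed a0 fixed) (intrKfloor 0) dvdz0.
  have bE : b = (pair b a / 2) *: a.
    by apply: refl_flipped; apply: oppr_inj; rewrite opprK.
  have := @roots_reduced _ _ rs a (pair b a / 2) aR; rewrite -bE => /(_ bR) [] half.
  - by rewrite -[pair b a](@divfK _ 2) ?half ?mul1r ?pnatr_eq0 // (intrKfloor 2).
  - by rewrite -[pair b a](@divfK _ 2) ?half ?mulN1r ?pnatr_eq0 // (intrKfloor (-2)).
Qed.

Lemma pair_rho_is_int a : a \in posroots -> is_int (pair (rho rs v) a).
Proof.
move=> aP; have := aP; rewrite mem_posroots => /andP[aR _].
case/dvdzP: (sum_floor_pair_posroots_even aP) => q qE; exists q.
rewrite /rho pairZl pair_suml.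
have -> : \sum_(b <- posroots) pair b a = (\sum_(b <- posroots) Num.floor (pair b a))%:~R.
  rewrite rmorph_sum; apply: eq_big_seq => b; rewrite mem_posroots => /andP[bR _].
  exact/esym/floor_pair_root.
by rewrite qE rmorphM /= mulrC -mulrA mulfV ?mulr1 // (intr_eq0 R 2).
Qed.

End Roots.

Section QuantumBruhatGraph.
Variables (R : realType) (n : nat) (rs : rootSystem R n) (v : 'cV[R]_n).
Hypothesis v_regular : forall a, a \in rs_roots rs -> dot a v != 0.
Implicit Types (x y : 'M[R]_n) (gs : seq 'cV[R]_n).
Local Notation len := (len rs v).
Local Notation qbg_walk := (qbg_walk rs v).
Local Notation qbg_dist := (qbg_dist rs v).

Lemma len_qbg_edge x a y : qbg_edge rs v x a y -> len y = (len x).+1 %[mod 2].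
Proof.
case/and3P => aP _ /orP[/eqP -> // | /eqP quantum].
have [k kE] := pair_rho_is_int v_regular aP.
have yE : Posz (len y) = (- k) * 2 + Posz (len x).+1.
  apply: (@intr_inj R); rewrite rmorphD rmorphM rmorphN /= -!pmulrn quantum kE; ring.
by apply/eqP; rewrite -eqz_nat -!modz_nat yE modzMDl.
Qed.

Lemma qbg_walk_cat x (s1 s2 : seq 'cV[R]_n) :
  qbg_walk x (s1 ++ s2) = qbg_walk x s1 && qbg_walk (walk_end x s1) s2.
Proof. by elim: s1 x => [|g s1 IH] x //=; rewrite IH andbA. Qed.

Lemma walk_end_cat x (s1 s2 : seq 'cV[R]_n) :
  walk_end x (s1 ++ s2) = walk_end (walk_end x s1) s2.
Proof. exact: foldl_cat. Qed.

Lemma len_walk_end x gs :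
  qbg_walk x gs -> len (walk_end x gs) = len x + size gs %[mod 2].
Proof.
elim: gs x => [|g gs IH] x; first by rewrite addn0.
have -> : walk_end x (g :: gs) = walk_end (x *m refl g) gs by [].
case/andP => /len_qbg_edge edge /IH ->.
by rewrite -modnDml edge modnDml addSnnS.
Qed.

Lemma qbg_walk_posroots x gs : qbg_walk x gs -> all (mem (posroots rs v)) gs.
Proof. by elim: gs x => //= g gs IH x /andP[/and3P[-> _ _] /IH]. Qed.

Lemma mem_seqs_len gs : all (mem (posroots rs v)) gs -> gs \in seqs_len rs v (size gs).
Proof.
elim: gs => [|g gs IH] /=; first by rewrite inE.
by case/andP => gP /IH gsP; apply/allpairsP; exists (g, gs).
Qed.

Lemma size_seqs_len k gs : gs \in seqs_len rs v k -> size gs = k.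
Proof.
elim: k gs => [|k IH] gs /=; first by rewrite inE => /eqP ->.
by case/allpairsP => [[g t] [/= _ /IH <- ->]].
Qed.

Lemma qbg_dist_walk_end x gs : qbg_walk x gs ->
  qbg_dist x (walk_end x gs) = size gs %[mod 2].
Proof.
move=> walk; rewrite /qbg_dist.
case: excluded_middle_informative => [reach | []]; last first.
  exists (size gs); apply/hasP; exists gs; last by rewrite walk eqxx.
  exact/mem_seqs_len/(qbg_walk_posroots walk).
case: ex_minnP => k /hasP[gs' /size_seqs_len <- /andP[walk' /eqP end']] _.
apply/eqP; rewrite -(eqn_modDl (len x)) -(len_walk_end walk') end'.
by rewrite (len_walk_end walk).
Qed.

End QuantumBruhatGraph.

Section AdmissibleWalk.
Variables (R : realType) (n : nat) (rs : rootSystem R n) (v : 'cV[R]_n).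
Hypothesis v_regular : forall a, a \in rs_roots rs -> dot a v != 0.
Variables (ord : seq 'cV[R]_n) (lam : 'cV[R]_n) (w : 'M[R]_n) (A : seq nat).
Hypothesis A_walk : adm_walk rs v ord lam w A.
Local Notation G := [seq sgnabs v (gam rs v ord lam j) | j <- A].
Local Notation u := (u rs v ord lam w A).
Local Notation len := (len rs v).

Lemma adm_walkE x B : adm_walk rs v ord lam x B =
  qbg_walk rs v x [seq sgnabs v (gam rs v ord lam j) | j <- B].
Proof. by elim: B x => //= j B IH x; rewrite IH. Qed.

Lemma u_walk_end a : (a <= size A)%N -> u a = walk_end w (take a G).
Proof.
by move=> aA; rewrite /u /us nth_cons_scanl // -map_take /walk_end foldl_map.
Qed.

Lemma qbg_walk_take a : qbg_walk rs v w (take a G).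
Proof.
by move: A_walk; rewrite adm_walkE -{1}(cat_take_drop a G) qbg_walk_cat => /andP[].
Qed.

Lemma len_u a : (a <= size A)%N -> len (u a) = len w + a %[mod 2].
Proof.
move=> aA; rewrite u_walk_end // (len_walk_end v_regular (qbg_walk_take a)).
by rewrite size_takel ?size_map.
Qed.

Lemma qbg_dist_u i j :
  (i <= j <= size A)%N -> qbg_dist rs v (u i) (u j) = j - i %[mod 2].
Proof.
case/andP => ij jA; rewrite !u_walk_end ?(leq_trans ij) //.
have Gj : take j G = take i G ++ take (j - i) (drop i G) by rewrite -takeD subnKC.
have := qbg_walk_take j; rewrite Gj walk_end_cat qbg_walk_cat => /andP[_ walk].
by rewrite (qbg_dist_walk_end v_regular walk) size_takel // size_drop size_map leq_sub2r.
Qed.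

End AdmissibleWalk.

Section Inversions.
Variables (R : realType) (n : nat) (rs : rootSystem R n) (v : 'cV[R]_n).
Variables (ord : seq 'cV[R]_n) (lam : 'cV[R]_n).
Local Notation r_len := (r_len rs v ord lam).
Local Notation beta := (beta rs v ord lam).
Local Notation gam := (gam rs v ord lam).
Local Notation dd := (dd rs v ord lam).

Lemma Inv_le_total : total (Inv_le v ord lam).
Proof.
move=> b b'; rewrite /Inv_le.
by case: (ltgtP (dval lam b) (dval lam b')) => //= _; apply: leq_total.
Qed.

Lemma sorted_dval_Inv_list : sorted <=%R (map (dval lam) (Inv_list rs v ord lam)).
Proof.
rewrite sorted_map; apply: sub_sorted (sort_sorted Inv_le_total _) => b b' /=.
by case/orP => [/ltW | /andP[/eqP -> _]].
Qed.

Lemma dd_homo : {in gtn r_len &, {homo dd : i j / (i < j)%N >-> i <= j}}.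
Proof.
move=> i j ir jr /ltnW ij; rewrite /dd /beta -!(nth_map (0, 0) (dval lam (0, 0))) //.
by apply: le_sorted_leq_nth; rewrite ?inE ?size_map //; apply: sorted_dval_Inv_list.
Qed.

Lemma beta_in_Inv j : (j < r_len)%N ->
  in_Inv v lam (beta j) /\ exists k : nat, (beta j).2 = Posz k.
Proof.
move=> jr; have := mem_nth (0, 0) jr.
rewrite -/(beta j) mem_sort mem_filter => /andP[-> /allpairsP].
by case=> [[a k] [_ _ ->]]; split => //; exists k.
Qed.

(* d_j = k / <lam, gamma_j^vee> where beta_j^vee = gamma_j^vee + k delta~ lies in
   Inv(lam): k = 0 forces gamma_j positive, k = <lam, gamma_j^vee> forces it negative. *)
Lemma dd_signs j : (j < r_len)%N ->
  (dd j <= 0 -> is_pos v (gam j)) /\ (1 <= dd j -> ~~ is_pos v (gam j)).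
Proof.
move=> /beta_in_Inv[/andP[k_pos t_neg] [k k_eq]].
move: k_pos t_neg; rewrite /aff_pos /tlam_neg /dd /gam /dval k_eq.
set p := pair lam (beta j).1 => k_pos t_neg.
have k_ge0 : 0 <= (Posz k)%:~R :> R by rewrite ler0n.
have p_gt0 : 0 < p.
  rewrite ltNge; apply/negP => p_le0.
  move: t_neg; rewrite ltNge subr_ge0 (le_trans p_le0 k_ge0) /=.
  case/andP => /eqP k_p g_neg.
  have k0 : k = 0%N.
    by apply/eqP; rewrite -(lern0 R) -[_%:R]/((Posz k)%:~R) (subr0_eq k_p).
  by move: k_pos; rewrite k0 ltxx /= (negbTE g_neg).
split.
- rewrite ler_pdivrMr // mul0r => k_le0.
  have k0 : k = 0%N by apply/eqP; rewrite -(lern0 R).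
  by move: k_pos; rewrite k0 ltxx.
- rewrite ler_pdivlMr // mul1r => p_le_k.
  by move: t_neg; rewrite ltNge subr_ge0 p_le_k /= => /andP[].
Qed.

End Inversions.

Section Xi.
Variables (R : realType) (n : nat) (rs : rootSystem R n) (v : 'cV[R]_n).
Hypothesis v_regular : forall a, a \in rs_roots rs -> dot a v != 0.
Variables (ord : seq 'cV[R]_n) (lam : 'cV[R]_n) (w : 'M[R]_n) (A : seq nat).
Hypotheses (A_sorted : sorted ltn A) (A_lt : all (fun j => j < r_len rs v ord lam)%N A).
Hypothesis A_walk : adm_walk rs v ord lam w A.
Local Notation dd := (dd rs v ord lam).
Local Notation ds := (ds rs v ord lam A).
Local Notation cs := (cs rs v ord lam A).
Local Notation t := (t_A rs v ord lam A).
Local Notation c := (cc rs v ord lam A).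
Local Notation m := (mm rs v ord lam A).
Local Notation nn := (nn rs v ord lam A).
Local Notation negative j := (~~ is_pos v (gam rs v ord lam j)).
Local Notation negs k := (count (fun j => negative j) (take k A)).
Local Notation u := (u rs v ord lam w A).
Local Notation Xi := (Xi rs v ord lam w A).

Lemma sorted_ds : sorted <=%R ds.
Proof. by apply: homo_sorted_in A_lt A_sorted => i j; apply: dd_homo. Qed.

Lemma mem_cs x : (x \in cs) = [&& x \in ds, 0 < x & x < 1].
Proof. by rewrite mem_sort mem_undup mem_filter andbC. Qed.

Lemma sorted_cs : sorted <=%R cs.
Proof. exact: sort_sorted le_total _. Qed.

Lemma cc_nth a : (0 < a < t)%N -> c a = nth 0 cs a.-1.
Proof. by case/andP => a_gt0 a_lt; rewrite /cc eqn0Ngt a_gt0 a_lt. Qed.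

Lemma cc_in_cs a : (0 < a < t)%N -> c a \in cs.
Proof. by move=> a_bd; rewrite cc_nth // mem_nth // -ltnS prednK //; case/andP: a_bd. Qed.

Lemma cc_ge_t a : (t <= a)%N -> c a = 1.
Proof. by move=> ta; rewrite /cc ltnNge ta; case: eqP => // a0; move: ta; rewrite a0. Qed.

Lemma cc_homo : {homo c : a b / (a <= b)%N >-> a <= b}.
Proof.
move=> a b ab; case: (ltnP a t) => [a_lt | ta].
  2: by rewrite !cc_ge_t // (leq_trans ta).
have c_in01 x : x \in cs -> 0 < x < 1 by rewrite mem_cs => /andP[_].
case: (posnP a) => [-> | a_gt0].
  case: (posnP b) => [-> // | b_gt0]; case: (ltnP b t) => [b_lt | tb].
    by have /c_in01/andP[/ltW] := cc_in_cs (introT andP (conj b_gt0 b_lt)).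
  by rewrite (cc_ge_t tb) ler01.
have a_cs := cc_in_cs (introT andP (conj a_gt0 a_lt)).
case: (ltnP b t) => [b_lt | tb].
  2: by rewrite (cc_ge_t tb); case/c_in01/andP: a_cs => _ /ltW.
have b_gt0 := leq_trans a_gt0 ab.
rewrite !cc_nth ?a_gt0 ?a_lt ?b_gt0 ?b_lt //.
apply: (le_sorted_leq_nth 0 sorted_cs); last by rewrite -!subn1 leq_sub2r.
  by rewrite inE -ltnS prednK.
by rewrite inE -ltnS prednK.
Qed.

Lemma lt_cc1 d : d \in ds -> d < c 1 -> d <= 0.
Proof.
move=> d_ds d_lt; rewrite leNgt; apply/negP => d_gt0.
have d_lt1 : d < 1 by rewrite (lt_le_trans d_lt) // -(cc_ge_t (leqnn t)) cc_homo.
have d_cs : d \in cs by rewrite mem_cs d_ds d_gt0.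
have := @cc_homo 1 (index d cs).+1 isT.
rewrite (cc_nth (a := (index d cs).+1)) ?ltnS ?index_mem //= nth_index //.
by move/(lt_le_trans d_lt); rewrite ltxx.
Qed.

Lemma mm_homo : {homo m : a b / (a <= b)%N}.
Proof.
by move=> a b ab; apply: sub_count => d /= d_lt; apply: lt_le_trans d_lt (cc_homo ab).
Qed.

Lemma mm_le_size a : (m a <= size A)%N.
Proof. by rewrite -(size_map dd) count_size. Qed.

Lemma take_mm a : take (m a) A = [seq j <- A | dd j < c a].
Proof.
rewrite /mm count_map -size_filter.
by rewrite -[X in take _ X](filter_lt_cat_ge (c a) sorted_ds) take_size_cat.
Qed.

Lemma drop_mm a : drop (m a) A = [seq j <- A | c a <= dd j].
Proof.
rewrite /mm count_map -size_filter.
by rewrite -[X in drop _ X](filter_lt_cat_ge (c a) sorted_ds) drop_size_cat.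
Qed.

Lemma negs_mm1 : negs (m 1) = 0%N.
Proof.
rewrite take_mm; apply/eqP; rewrite -leqn0 leqNgt -has_count; apply/hasPn => j.
rewrite mem_filter negbK => /andP[j_lt jA].
by apply: (dd_signs (allP A_lt j jA)).1; apply: lt_cc1 j_lt; apply: map_f.
Qed.

Lemma n_A_negs : n_A rs v ord lam A = (negs (m t) + (size A - m t))%N.
Proof.
rewrite /n_A -{1}(cat_take_drop (m t) A) count_cat -size_drop; congr (_ + _)%N.
apply/eqP; rewrite -all_count; apply/allP => j.
rewrite drop_mm cc_ge_t // mem_filter => /andP[j_ge1 jA].
exact: (dd_signs (allP A_lt j jA)).2.
Qed.

Lemma negs_homo : {homo (fun k => negs k) : i j / (i <= j)%N}.
Proof. by move=> i j ij; rewrite -(subnKC ij) takeD count_cat leq_addr. Qed.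

Lemma nnE a : nn a = (m a + (negs (m a.+1) - negs (m a)))%N.
Proof.
rewrite /nn /negflags -map_drop -map_take count_map; congr (_ + _)%N.
by rewrite -[in take (m a.+1) A](subnKC (mm_homo (leqnSn a))) takeD count_cat addKn.
Qed.

Lemma nn_bounds a : (m a <= nn a <= size A)%N.
Proof.
rewrite /nn leq_addr /= -[X in (_ <= X)%N](subnKC (mm_le_size a)) leq_add2l.
by rewrite (leq_trans (count_size _ _)) // size_take_min size_drop size_map geq_minr.
Qed.

Lemma sum_nn_sub_mm : (\sum_(1 <= a < t) (nn a - m a))%N = negs (m t).
Proof.
rewrite (eq_bigr (fun a => negs (m a.+1) - negs (m a)))%N => [|a _].
  2: by rewrite nnE addKn.
rewrite (@telescope_sumn _ _ (fun a => negs (m a))) ?negs_mm1 ?subn0 // => a b ab.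
exact/negs_homo/mm_homo.
Qed.

Lemma iota_Xi : iota_eta Xi = u (m t).
Proof. by rewrite /iota_eta /Xi /= subn1. Qed.

Lemma end_A_u : end_A rs v ord lam w A = u (size A).
Proof. by rewrite /end_A /u -nth_last /us /= size_scanl. Qed.

Lemma nega_Xi :
  nega rs v Xi = (\sum_(1 <= a < t) qbg_dist rs v (u (m a)) (u (nn a)))%N.
Proof.
rewrite /nega size_map size_iota [RHS]big_nat_rev.
apply: eq_big_nat => k /andP[k_ge1 k_lt].
rewrite (nth_map 0%N) ?size_iota // nth_iota // (nth_map 0%N) ?size_iota; last by lia.
by rewrite nth_iota; [congr (qbg_dist rs v (u (m _)) (u (nn _))); lia | lia].
Qed.

Lemma nega_Xi_mod2 : nega rs v Xi = negs (m t) %[mod 2].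
Proof.
rewrite nega_Xi -sum_nn_sub_mm -modn_summ -[in RHS]modn_summ.
congr (_ %% 2)%N; apply: eq_big_nat => a _.
by apply: (qbg_dist_u v_regular A_walk); apply: nn_bounds.
Qed.

End Xi.

Theorem corollary5p9 (R : realType) (n : nat) (rs : rootSystem R n)
  (v : 'cV[R]_n) (v_regular : forall a, a \in rs_roots rs -> dot a v != 0)
  (lam : 'cV[R]_n) (lam_weight : is_weight rs lam)
  (ord : seq 'cV[R]_n) (ord_RO : RO_lambda rs v ord lam)
  (w : 'M[R]_n) (w_in_W : inW rs w)
  (A : seq nat) (A_adm : admissible rs v ord lam w A) :
  (Posz (n_A rs v ord lam A)
     = Posz (nega rs v (Xi rs v ord lam w A))
       + Posz (len rs v (end_A rs v ord lam w A))
       - Posz (len rs v (iota_eta (Xi rs v ord lam w A))) %[mod 2])%Z.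
Proof.
case/and3P: A_adm => A_sorted A_lt A_walk.
have m_le := mm_le_size rs v ord lam A (t_A rs v ord lam A).
apply: eqz_mod2_addB.
rewrite (n_A_negs A_sorted A_lt) -modnDmr iota_Xi (len_u v_regular A_walk) // modnDmr.
rewrite -[in RHS]modnDml (nega_Xi_mod2 v_regular A_sorted A_lt A_walk) modnDml.
rewrite -[in RHS]modnDmr end_A_u (len_u v_regular A_walk) // modnDmr.
by congr (_ %% 2)%N; lia.
Qed.
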